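(* For all probability measures $P,Q$ and all $\gamma\in[1,\infty)$, $$E_\gamma(P\|Q)\le\tfrac12\Bigl[1-\gamma+\sqrt{(\gamma-1)^2+\frac{4\gamma\,\chi^2(P\|Q)}{1+\gamma+\chi^2(P\|Q)}}\,\Bigr],$$ $$E_\gamma(P\|Q)\le\tfrac12\Bigl[1-\gamma+\sqrt{(\gamma-1)^2+4\gamma\bigl(1-e^{-D(P\|Q)}\bigr)}\,\Bigr],$$ where $D(P\|Q)$ is measured in nats. In particular ($\gamma=1$), $|P-Q|\le 2\sqrt{1-e^{-D(P\|Q)}}$.
   Context: For densities $p,q$ w.r.t. a dominating measure $\mu$: $E_\gamma(P\|Q):=\int(p-\gamma q)^+\,\mathrm{d}\mu$; $|P-Q|:=\int|p-q|\,\mathrm{d}\mu=2E_1(P\|Q)$; $\chi^2(P\|Q):=\int\frac{(p-q)^2}{q}\,\mathrm{d}\mu$ (equal to $+\infty$ if $P\not\ll Q$); $D(P\|Q):=\int p\ln\frac pq\,\mathrm{d}\mu$ (relative entropy in nats, $+\infty$ if $P\not\ll Q$). *)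

From HB Require Import structures.
From mathcomp Require Import all_boot all_order all_algebra.
From mathcomp Require Import all_classical all_reals all_analysis.
Set Implicit Arguments. Unset Strict Implicit. Unset Printing Implicit Defensive.
Import Order.TTheory GRing.Theory Num.Theory.
Local Open Scope ring_scope.
Local Open Scope ereal_scope.

Section fdiv.
Context d (T : measurableType d) (R : realType) (mu : {measure set T -> \bar R}).

Definition is_density (p : T -> R) : Prop :=
  measurable_fun setT p /\ (forall x, (0 <= p x)%R) /\
  \int[mu]_x (p x)%:E = 1.

Definition Egamma (p q : T -> R) (g : R) : \bar R :=
  \int[mu]_x (Num.max 0 (p x - g * q x))%:E.

Definition TVnorm (p q : T -> R) : \bar R :=
  \int[mu]_x `|p x - q x|%:E.

(* chi^2(P||Q) = int (p-q)^2/q dmu, with (a^2/0) = +oo for a <> 0 and 0/0 = 0;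
   this equals +oo when P is not << Q *)
Definition chi2 (p q : T -> R) : \bar R :=
  \int[mu]_x (if q x == 0%R then (if p x == 0%R then 0 else +oo)
              else ((p x - q x) ^+ 2 / q x)%:E).

(* D(P||Q) = int p ln(p/q) dmu (nats), with 0 ln(0/q) = 0 and p ln(p/0) = +oo
   for p > 0; this equals +oo when P is not << Q *)
Definition KL (p q : T -> R) : \bar R :=
  \int[mu]_x (if p x == 0%R then 0
              else if q x == 0%R then +oo
              else (p x * ln (p x / q x))%:E).
End fdiv.

(* c / (1 + gamma + c), extended by its limit 1 at c = +oo *)
Definition chi2_ratio (R : realType) (g : R) (c : \bar R) : R :=
  match c with
  | +oo%E => 1%R
  | _ => (fine c / (1 + g + fine c))%R
  end.

(* Let A = {p > g q}, a = P(A) and b = Q(A). Then E_g(P||Q) = a - g b, and |P - Q| = 2 (a - b)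
   when g = 1. Evaluating the variational (Fenchel) lower bounds for D and chi^2 on test
   functions that are constant on A and on its complement shows that D(P||Q) and chi^2(P||Q)
   dominate the divergences of the two-point laws (a, 1 - a) and (b, 1 - b). What remains are
   two-point inequalities for E = a - g b: E (E + g - 1) <= g (1 - e^-D), through the
   Bhattacharyya bound e^-D <= (sqrt (a b) + sqrt ((1 - a) (1 - b)))^2, and
   E (E + g - 1) <= g chi^2 / (1 + g + chi^2). Solving these quadratic inequalities for E gives
   the bounds. *)

From mathcomp Require Import all_boot all_order all_algebra.
From mathcomp Require Import all_classical all_reals all_analysis.
From mathcomp Require Import ring lra measurable_realfun.

Set Implicit Arguments.
Unset Strict Implicit.
Unset Printing Implicit Defensive.

Import Order.TTheory GRing.Theory Num.Theory.
Local Open Scope ring_scope.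

Section binary.
Variable R : realType.
Implicit Types a b c g h x E K : R.

Lemma quadratic_root_bound E g x : 0 <= E -> 1 <= g ->
  E * (E + g - 1) <= g * x ->
  E <= (1 - g + Num.sqrt ((g - 1) ^+ 2 + 4 * g * x)) / 2.
Proof.
move=> E0 g1 h.
suff : 2 * E + g - 1 <= Num.sqrt ((g - 1) ^+ 2 + 4 * g * x) by lra.
rewrite -[leLHS]ger0_norm; last by lra.
rewrite -sqrtr_sqr; apply: ler_wsqrtr; nra.
Qed.

Lemma excess_gap_expansion a b g :
  g - (a - g * b) * (a - g * b + g - 1) =
  g * a * b + g * (1 - a) * (1 - b) + a * (1 - a) + g ^+ 2 * b * (1 - b).
Proof. ring. Qed.

Lemma excess_quad_le a b g : 0 <= g -> 0 <= a <= 1 -> 0 <= b <= 1 ->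
  (a - g * b) * (a - g * b + g - 1) <= g.
Proof.
move=> g0 /andP[a0 a1] /andP[b0 b1]; rewrite -subr_ge0 excess_gap_expansion.
have ? : 0 <= g * a * b by rewrite !mulr_ge0.
have ? : 0 <= g * (1 - a) * (1 - b) by rewrite !mulr_ge0 ?subr_ge0.
have ? : 0 <= a * (1 - a) by rewrite mulr_ge0 ?subr_ge0.
have ? : 0 <= g ^+ 2 * b * (1 - b) by rewrite !mulr_ge0 ?sqr_ge0 ?subr_ge0.
lra.
Qed.

Lemma bhattacharyya_binary a b K : 0 < a <= 1 -> 0 < b < 1 ->
  (forall u v, u * a + v * (1 - a) + 1 - expR u * b - expR v * (1 - b) <= K) ->
  expR (- K) <= (Num.sqrt (a * b) + Num.sqrt ((1 - a) * (1 - b))) ^+ 2.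
Proof.
move=> /andP[a0 a1] /andP[b0 b1]; have [-> test|a_lt1 test] := eqVneq a 1.
  (* the bound reads K >= - ln b, approached as v -> -oo *)
  rewrite subrr !mul0r sqrtr0 addr0 mul1r sqr_sqrtr; last exact: ltW.
  rewrite -[leRHS]lnK ?posrE // ler_expR lerNl.
  apply/ler_addgt0Pr => e e0.
  have := test (- ln b) (ln (e / (1 - b))).
  rewrite expRN lnK ?posrE // lnK ?posrE ?divr_gt0 ?subr_gt0 // mulVf ?gt_eqF //
    divfK ?gt_eqF ?subr_gt0 //; lra.
have a'0 : 0 < 1 - a by rewrite subr_gt0 lt_neqAle a_lt1 a1.
have b'0 : 0 < 1 - b by rewrite subr_gt0.
set sa := Num.sqrt a; set sb := Num.sqrt b.
set sa' := Num.sqrt (1 - a); set sb' := Num.sqrt (1 - b).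
have sa0 : 0 < sa by rewrite sqrtr_gt0.
have sb0 : 0 < sb by rewrite sqrtr_gt0.
have sa'0 : 0 < sa' by rewrite sqrtr_gt0.
have sb'0 : 0 < sb' by rewrite sqrtr_gt0.
rewrite !sqrtrM ?(ltW a0) ?(ltW a'0) // -/sa -/sb -/sa' -/sb'.
set B := sa * sb + sa' * sb'.
have B0 : 0 < B by rewrite addr_gt0 ?mulr_gt0.
have ea : a = sa ^+ 2 by rewrite sqr_sqrtr ?ltW.
have eb : b = sb ^+ 2 by rewrite sqr_sqrtr ?ltW.
have ea' : 1 - a = sa' ^+ 2 by rewrite sqr_sqrtr ?ltW.
have eb' : 1 - b = sb' ^+ 2 by rewrite sqr_sqrtr ?ltW.
(* the test functions attaining the Bhattacharyya bound: exp u = X, exp v = Y *)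
set X := sa / (sb * B); set Y := sa' / (sb' * B).
have X0 : 0 < X by rewrite divr_gt0 ?mulr_gt0.
have Y0 : 0 < Y by rewrite divr_gt0 ?mulr_gt0.
have XY1 : X * b + Y * (1 - b) = 1.
  by rewrite eb' eb /X /Y /B; field; rewrite !gt_eqF.
have mix : a * X^-1 + (1 - a) * Y^-1 = B ^+ 2.
  by rewrite ea' ea /X /Y /B; field; rewrite !gt_eqF.
have := test (ln X) (ln Y); rewrite !lnK // => testXY.
have X'0 : 0 < X^-1 by rewrite invr_gt0.
have Y'0 : 0 < Y^-1 by rewrite invr_gt0.
have := concave_ln (Itv01 (ltW a0) a1) X'0 Y'0.
rewrite !convRE /= /unstable.onem mix !lnV ?posrE // => jensen.
by rewrite -[leRHS]lnK ?posrE ?exprn_gt0 // ler_expR; lra.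
Qed.

Lemma bhattacharyya_le_excess_gap a b g : 0 <= g -> 0 <= a <= 1 -> 0 <= b <= 1 ->
  g * (Num.sqrt (a * b) + Num.sqrt ((1 - a) * (1 - b))) ^+ 2
    <= g - (a - g * b) * (a - g * b + g - 1).
Proof.
move=> g0 /andP[a0 a1] /andP[b0 b1].
have a'0 : 0 <= 1 - a by rewrite subr_ge0.
have b'0 : 0 <= 1 - b by rewrite subr_ge0.
rewrite excess_gap_expansion !sqrtrM //.
set sa := Num.sqrt a; set sb := Num.sqrt b.
set sa' := Num.sqrt (1 - a); set sb' := Num.sqrt (1 - b).
have ea : a = sa ^+ 2 by rewrite sqr_sqrtr.
have eb : b = sb ^+ 2 by rewrite sqr_sqrtr.
have ea' : 1 - a = sa' ^+ 2 by rewrite sqr_sqrtr.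
have eb' : 1 - b = sb' ^+ 2 by rewrite sqr_sqrtr.
rewrite ea' eb' ea eb -subr_ge0.
have -> : g * sa ^+ 2 * sb ^+ 2 + g * sa' ^+ 2 * sb' ^+ 2 + sa ^+ 2 * sa' ^+ 2
    + g ^+ 2 * sb ^+ 2 * sb' ^+ 2 - g * (sa * sb + sa' * sb') ^+ 2
  = (sa * sa' - g * sb * sb') ^+ 2 by ring.
exact: sqr_ge0.
Qed.

Lemma excess_KL_binary a b g (K : \bar R) : 1 <= g -> 0 <= a <= 1 -> 0 <= b <= 1 ->
  0 <= a - g * b ->
  (forall u v, ((u * a + v * (1 - a) + 1 - expR u * b - expR v * (1 - b))%:E <= K)%E) ->
  (a - g * b) * (a - g * b + g - 1) <= g * (1 - fine (expeR (- K)%E)).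
Proof.
move=> g1 a01 b01 E0; have /andP[a0 a1] := a01; have /andP[b0 b1] := b01.
case: K => [K | | ] test; last 2 first.
- by rewrite /= subr0 mulr1 excess_quad_le //; lra.
- by have := test 0 0; rewrite leeNy_eq.
rewrite /=; set E := a - g * b.
suff : g * expR (- K) <= g - E * (E + g - 1) by lra.
have g0 : 0 <= g by lra.
have [E_eq0 | E_neq0] := eqVneq E 0.
  have := test 0 0; rewrite !expR0 lee_fin => K0.
  rewrite E_eq0 mul0r subr0 ler_piMr // expR_le1; lra.
have E_gt0 : 0 < E by rewrite lt_neqAle eq_sym E_neq0.
have b_lt_a : b < a by rewrite /E in E_gt0; nra.
have [b_eq0 | b_neq0] := eqVneq b 0.
  have a_gt0 : 0 < a by rewrite -b_eq0.
  have := test ((K + 1) / a) 0.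
  by rewrite b_eq0 lee_fin divfK ?gt_eqF // expR0; lra.
have b_gt0 : 0 < b by rewrite lt_neqAle eq_sym b_neq0.
rewrite /E; apply: (le_trans _ (bhattacharyya_le_excess_gap g0 a01 b01)).
rewrite ler_wpM2l // bhattacharyya_binary //.
- by rewrite (lt_trans b_gt0 b_lt_a).
- by rewrite b_gt0 (lt_le_trans b_lt_a a1).
Qed.

Lemma binary_chi2_le a b c : 0 < b < 1 ->
  (forall al be, 2 * (al - be) * (a - b) - al ^+ 2 * b - be ^+ 2 * (1 - b) <= c) ->
  (a - b) ^+ 2 / (b * (1 - b)) <= c.
Proof.
move=> /andP[b0 b1] test; have b'0 : 0 < 1 - b by rewrite subr_gt0.
have := test ((a - b) / b) (- (a - b) / (1 - b)).
by congr (_ <= _); field; rewrite !gt_eqF.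
Qed.

Lemma excess_chi2_poly b E h : 0 <= b -> 0 <= E -> 0 <= h ->
  0 <= 1 - (1 + h) * b - E ->
  E * (E + h) * (2 + h) * (b * (1 - b)) <= (h * b + E) ^+ 2 * (1 + h - E * (E + h)).
Proof.
move=> b0 E0 h0; set w := 1 - (1 + h) * b - E => w0; rewrite -subr_ge0.
(* in the variables b, E, h, w (= 1 - a) the difference has nonnegative coefficients *)
have -> : (h * b + E) ^+ 2 * (1 + h - E * (E + h)) - E * (E + h) * (2 + h) * (b * (1 - b))
  = b ^+ 2 * (1 + h) ^+ 3 * (E + b * h) ^+ 2
  + w * (E ^+ 3 * (2 + h) + b * E ^+ 2 * h * (3 + 2 * h)
         + b ^+ 2 * E * h * (1 + h) * (2 + 3 * h) + 2 * b ^+ 3 * h ^+ 2 * (1 + h) ^+ 2)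
  + w ^+ 2 * (E ^+ 2 * (1 + h) + b * E * h ^+ 2 + b ^+ 2 * h ^+ 2 * (1 + h)).
  by rewrite /w; ring.
clearbody w.
by repeat (apply: addr_ge0 || apply: mulr_ge0 || apply: exprn_ge0 || apply: ler0n || apply: ler01 || done).
Qed.

Lemma excess_chi2_fin a b g c : 1 <= g -> 0 <= a <= 1 -> 0 < b < 1 ->
  0 < a - g * b -> (a - b) ^+ 2 <= c * (b * (1 - b)) ->
  (a - g * b) * (a - g * b + g - 1) * (1 + g + c) <= g * c.
Proof.
move=> g1 a01 /andP[b0 b1] E_gt0 chi_ge; set E := a - g * b in E_gt0 *.
have bb'_gt0 : 0 < b * (1 - b) by rewrite mulr_gt0 // subr_gt0.
have G0 : 0 <= g - E * (E + g - 1).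
  by rewrite subr_ge0; apply: excess_quad_le; [lra | exact: a01 | rewrite !ltW].
have h0 : 0 <= g - 1 by rewrite subr_ge0.
have a'0 : 0 <= 1 - (1 + (g - 1)) * b - E by rewrite /E; lra.
have := excess_chi2_poly (ltW b0) (ltW E_gt0) h0 a'0.
have -> : 1 + (g - 1) = g by ring.
have -> : 2 + (g - 1) = 1 + g by ring.
have -> : E + (g - 1) = E + g - 1 by ring.
have -> : (g - 1) * b + E = a - b by rewrite /E; ring.
move=> /le_trans /(_ (ler_wpM2r G0 chi_ge)).
by rewrite [X in _ <= X -> _]mulrAC ler_pM2r //; lra.
Qed.

Lemma excess_chi2_binary a b g (C : \bar R) : 1 <= g -> 0 <= a <= 1 -> 0 <= b <= 1 ->
  0 <= a - g * b ->
  (forall al be,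
    ((2 * (al - be) * (a - b) - al ^+ 2 * b - be ^+ 2 * (1 - b))%:E <= C)%E) ->
  (a - g * b) * (a - g * b + g - 1) <= g * chi2_ratio g C.
Proof.
move=> g1 a01 b01 E0; have /andP[a0 a1] := a01; have /andP[b0 b1] := b01.
have g0 : 0 <= g by lra.
case: C => [c | | ] test; last 2 first.
- by rewrite /= mulr1 excess_quad_le.
- by have := test 0 0; rewrite leeNy_eq.
have c0 : 0 <= c by have := test 0 0; rewrite lee_fin; lra.
rewrite /chi2_ratio /= mulrA ler_pdivlMr; last by lra.
set E := a - g * b in E0 *.
have [E_eq0 | E_neq0] := eqVneq E 0.
  by rewrite E_eq0 !mul0r mulr_ge0.
have E_gt0 : 0 < E by rewrite lt_neqAle eq_sym E_neq0.
have b_lt_a : b < a by rewrite /E in E_gt0; nra.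
have [b_eq0 | b_neq0] := eqVneq b 0.
  have a_gt0 : 0 < a by rewrite -b_eq0.
  have key : 2 * ((c + 1) / (2 * a)) * a = c + 1 by field; rewrite gt_eqF.
  by have := test ((c + 1) / (2 * a)) 0; rewrite b_eq0 lee_fin; lra.
have b01' : 0 < b < 1 by rewrite lt_neqAle eq_sym b_neq0 b0 (lt_le_trans b_lt_a).
have bb'_gt0 : 0 < b * (1 - b) by case/andP: b01' => *; rewrite mulr_gt0 // subr_gt0.
apply: excess_chi2_fin => //.
by rewrite -ler_pdivrMr // binary_chi2_le.
Qed.

End binary.

Section integral_monotonicity.
Context d (T : measurableType d) (R : realType) (mu : {measure set T -> \bar R}).
Local Open Scope ereal_scope.

(* Unlike [ge0_le_integral], no measurability is needed: a nonnegative integral is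
   a supremum over the simple functions below the integrand. *)
Lemma ge0_le_integralT (f g : T -> \bar R) : (forall x, 0 <= f x) ->
  (forall x, f x <= g x) -> \int[mu]_x f x <= \int[mu]_x g x.
Proof.
move=> f0 fg; have g0 x : 0 <= g x := le_trans (f0 x) (fg x).
rewrite !ge0_integralTE //; apply: ereal_sup_le => _ /= [h hf <-].
by exists h => // x; exact: le_trans (hf x) (fg x).
Qed.

Lemma le_integralT_EFin (h : T -> R) (F : T -> \bar R) :
  (forall x, (h x)%:E <= F x) -> \int[mu]_x (h x)%:E <= \int[mu]_x F x.
Proof.
move=> hF; rewrite integralE [leRHS]integralE; apply: leeB.
- apply: ge0_le_integralT => x; first exact: funepos_ge0.
  exact: (@funepos_le _ _ setT (EFin \o h) F (fun y _ => hF y) x (in_setT x)).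
- apply: ge0_le_integralT => x; first exact: funeneg_ge0.
  exact: (@funeneg_le _ _ setT (EFin \o h) F (fun y _ => hF y) x (in_setT x)).
Qed.

End integral_monotonicity.

Section densities.
Context d (T : measurableType d) (R : realType) (mu : {measure set T -> \bar R}).

Lemma density_integrable p : is_density mu p -> mu.-integrable setT (EFin \o p).
Proof.
case=> mp [p0 ip]; apply/integrableP; split; first exact/measurable_EFinP.
rewrite (eq_integral (fun x => (p x)%:E)); first by rewrite ip ltry.
by move=> x _; rewrite /= ger0_norm.
Qed.

Lemma integrable_comb (D : set T) (f g : T -> R) k l : measurable D ->
  mu.-integrable D (EFin \o f) -> mu.-integrable D (EFin \o g) ->
  mu.-integrable D (EFin \o (fun x => k * f x + l * g x)).
Proof.
move=> mD iff ig.
have := integrableD mD (integrableZl mD k iff) (integrableZl mD l ig).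
by apply: eq_integrable => // x _ /=; rewrite EFinD !EFinM.
Qed.

Lemma integral_comb_restrict p q (A : set T) (c1 c2 c3 c4 : R) :
  is_density mu p -> is_density mu q -> measurable A ->
  (\int[mu]_x ((c1 * p x + c2 * q x + ((fun y => c3 * p y + c4 * q y) \_ A) x)%:E)
   = (c1 + c2 + c3 * (\int[mu]_(x in A) p x) + c4 * (\int[mu]_(x in A) q x))%:E)%E.
Proof.
move=> Hp Hq mA.
have ip := density_integrable Hp; have iq := density_integrable Hq.
have ipA : mu.-integrable A (EFin \o p) by exact: integrableS ip.
have iqA : mu.-integrable A (EFin \o q) by exact: integrableS iq.
have iA : mu.-integrable setT (EFin \o ((fun y => c3 * p y + c4 * q y) \_ A)).
  by rewrite -restrict_EFin; exact/(integrable_mkcond _ mA).1/integrable_comb.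
have iT := integrable_comb c1 c2 measurableT ip iq.
have iTA : mu.-integrable setT (EFin \o (fun x => c1 * p x + c2 * q x
    + ((fun y => c3 * p y + c4 * q y) \_ A) x)).
  have := integrableD measurableT iT iA.
  by apply: eq_integrable => // x _ /=; rewrite EFinD.
rewrite -[LHS](@fineK _ (\int[mu]_x _)%E); last exact: integrable_fin_num.
congr EFin; rewrite -/(Rintegral mu setT _) (RintegralD measurableT iT iA).
rewrite -Rintegral_mkcond (RintegralD mA (integrableZl mA c3 ipA) (integrableZl mA c4 iqA)).
rewrite (RintegralD measurableT (integrableZl measurableT c1 ip) (integrableZl measurableT c2 iq)).
rewrite !RintegralZl //.
have -> : \int[mu]_x p x = 1 by rewrite /Rintegral Hp.2.2.
have -> : \int[mu]_x q x = 1 by rewrite /Rintegral Hq.2.2.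
by rewrite !mulr1 addrA.
Qed.

End densities.

Section pointwise.
Variable R : realType.

Lemma ln_le_subr1 (x : R) : 0 < x -> ln x <= x - 1.
Proof. by move=> x_gt0; have := @le_ln1Dx R (x - 1); rewrite addrCA subrr addr0; apply; lra. Qed.

(* Young's inequality for the convex function t ln t. *)
Lemma KL_integrand_ge (pp qq f : R) : 0 <= pp -> 0 <= qq ->
  (((f + 1) * pp - expR f * qq)%:E <=
    (if pp == 0%R then 0 else if qq == 0%R then +oo else (pp * ln (pp / qq))%:E))%E.
Proof.
move=> p0 q0; have [->|pn] := eqVneq pp 0.
  by rewrite lee_fin mulr0 sub0r oppr_le0 mulr_ge0 ?expR_ge0.
have [->|qn] := eqVneq qq 0; first exact: leey.
have ppos : 0 < pp by rewrite lt0r pn.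
have qpos : 0 < qq by rewrite lt0r qn.
have r0 : 0 < expR f * qq / pp by rewrite divr_gt0 // mulr_gt0 // expR_gt0.
have := ln_le_subr1 r0.
rewrite ln_div ?lnM ?expRK ?posrE ?mulr_gt0 ?expR_gt0 ?invr_gt0 // => ln_le.
have cancel : pp * (expR f * qq / pp) = expR f * qq by rewrite mulrC divfK ?gt_eqF.
by rewrite lee_fin lnV ?posrE //; nra.
Qed.

Lemma chi2_integrand_ge (pp qq t : R) : 0 <= pp -> 0 <= qq ->
  ((2 * t * (pp - qq) - t ^+ 2 * qq)%:E <=
    (if qq == 0%R then (if pp == 0%R then 0 else +oo) else ((pp - qq) ^+ 2 / qq)%:E))%E.
Proof.
move=> p0 q0; have [->|qn] := eqVneq qq 0.
  have [->|pn] := eqVneq pp 0; last exact: leey.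
  by rewrite lee_fin subrr !mulr0 subr0.
have qpos : 0 < qq by rewrite lt0r qn.
rewrite lee_fin ler_pdivlMr //.
have := sqr_ge0 (pp - qq - t * qq); nra.
Qed.

End pointwise.

Definition excess_set d (T : measurableType d) (R : realType) (p q : T -> R) (g : R) :=
  [set x | g * q x < p x]%classic.

Section density_pair.
Context d (T : measurableType d) (R : realType) (mu : {measure set T -> \bar R}).
Variables (p q : T -> R) (Hp : is_density mu p) (Hq : is_density mu q).

Let p0 x : 0 <= p x := Hp.2.1 x.
Let q0 x : 0 <= q x := Hq.2.1 x.

Lemma measurable_excess_set g : measurable (excess_set p q g).
Proof.
have mf : measurable_fun setT (fun x => p x - g * q x).
  by apply: measurable_funB; [exact: Hp.1 | apply: measurable_funM => //; exact: Hq.1].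
have := mf measurableT `]0%R, +oo[%classic (measurable_itv _).
rewrite setTI; congr measurable; apply/seteqP; split => x /=;
  by rewrite in_itv /= andbT subr_gt0.
Qed.

Lemma patch_excess_set g (c3 c4 : R) x :
  ((fun y => c3 * p y + c4 * q y) \_ (excess_set p q g)) x =
  if g * q x < p x then c3 * p x + c4 * q x else 0.
Proof.
rewrite patchE; case: ifPn => [/set_mem -> //| /negP nA].
by case: ifP => // gqp; case: nA; exact: mem_set.
Qed.

Let a g := \int[mu]_(x in excess_set p q g) p x.
Let b g := \int[mu]_(x in excess_set p q g) q x.

Lemma integral_comb_excess g (c1 c2 c3 c4 : R) :
  (\int[mu]_x ((c1 * p x + c2 * q x +
     (if g * q x < p x then c3 * p x + c4 * q x else 0))%:E)
   = (c1 + c2 + c3 * a g + c4 * b g)%:E)%E.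
Proof.
rewrite -(integral_comb_restrict _ _ _ _ Hp Hq (measurable_excess_set g)).
by apply: eq_integral => x _; rewrite patch_excess_set.
Qed.

Lemma excess_comb_ge0 g (c1 c2 c3 c4 : R) :
  (forall x, 0 <= c1 * p x + c2 * q x +
     (if g * q x < p x then c3 * p x + c4 * q x else 0)) ->
  0 <= c1 + c2 + c3 * a g + c4 * b g.
Proof.
by move=> H; rewrite -lee_fin -integral_comb_excess; apply: integral_ge0 => x _; rewrite lee_fin.
Qed.

Lemma excess_masses g : 0 <= a g <= 1 /\ 0 <= b g <= 1.
Proof.
have ge0 c1 c2 c3 c4 : 0 <= c1 -> 0 <= c2 -> 0 <= c1 + c3 -> 0 <= c2 + c4 ->
    0 <= c1 + c2 + c3 * a g + c4 * b g.
  move=> *; apply: excess_comb_ge0 => x.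
  by have := p0 x; have := q0 x; case: ifP => _; nra.
have := ge0 0 0 1 0; have := ge0 1 0 (-1) 0; have := ge0 0 0 0 1; have := ge0 0 1 0 (-1).
by split; apply/andP; lra.
Qed.

Lemma excess_ge0 g : 0 <= a g - g * b g.
Proof.
suff : 0 <= 0 + 0 + 1 * a g + (- g) * b g by lra.
apply: excess_comb_ge0 => x.
by case: ifPn => gqp; lra.
Qed.

Lemma Egamma_excess g : Egamma mu p q g = (a g - g * b g)%:E.
Proof.
have -> : a g - g * b g = 0 + 0 + 1 * a g + (- g) * b g by ring.
rewrite -integral_comb_excess; apply: eq_integral => x _; congr EFin.
by case: ltP => gqp; [rewrite max_r | rewrite max_l]; lra.
Qed.

Lemma TVnorm_excess : TVnorm mu p q = (2 * (a 1 - b 1))%:E.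
Proof.
have -> : 2 * (a 1 - b 1) = - 1 + 1 + 2 * a 1 + (- 2) * b 1 by ring.
rewrite -integral_comb_excess; apply: eq_integral => x _; congr EFin.
by rewrite mul1r; case: ltP => qp; [rewrite ger0_norm | rewrite ler0_norm]; lra.
Qed.

Lemma KL_ge_excess_test g u v :
  ((u * a g + v * (1 - a g) + 1 - expR u * b g - expR v * (1 - b g))%:E
    <= KL mu p q)%E.
Proof.
have -> : u * a g + v * (1 - a g) + 1 - expR u * b g - expR v * (1 - b g)
    = (v + 1) + (- expR v) + (u - v) * a g + (- (expR u - expR v)) * b g by ring.
rewrite -integral_comb_excess; apply: le_integralT_EFin => x.
case: ifPn => _.
  by apply: (le_trans _ (KL_integrand_ge u (p0 x) (q0 x))); rewrite lee_fin; lra.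
by apply: (le_trans _ (KL_integrand_ge v (p0 x) (q0 x))); rewrite lee_fin; lra.
Qed.

Lemma chi2_ge_excess_test g al be :
  ((2 * (al - be) * (a g - b g) - al ^+ 2 * b g - be ^+ 2 * (1 - b g))%:E
    <= chi2 mu p q)%E.
Proof.
have -> : 2 * (al - be) * (a g - b g) - al ^+ 2 * b g - be ^+ 2 * (1 - b g)
    = 2 * be + (- 2 * be - be ^+ 2) + 2 * (al - be) * a g
      + (- 2 * (al - be) - (al ^+ 2 - be ^+ 2)) * b g by ring.
rewrite -integral_comb_excess; apply: le_integralT_EFin => x.
case: ifPn => _.
  by apply: (le_trans _ (chi2_integrand_ge al (p0 x) (q0 x))); rewrite lee_fin; lra.
by apply: (le_trans _ (chi2_integrand_ge be (p0 x) (q0 x))); rewrite lee_fin; lra.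
Qed.

Lemma excess_quadratic_bounds g : 1 <= g ->
  let E := a g - g * b g in
  [/\ 0 <= E, E * (E + g - 1) <= g * chi2_ratio g (chi2 mu p q)
    & E * (E + g - 1) <= g * (1 - fine (expeR (- KL mu p q)%E))].
Proof.
move=> g1 /=; have [a01 b01] := excess_masses g; have E0 := excess_ge0 g.
split => //; first exact: excess_chi2_binary (chi2_ge_excess_test g).
exact: excess_KL_binary (KL_ge_excess_test g).
Qed.

End density_pair.

Theorem corollary3 (d : measure_display) (T : measurableType d) (R : realType)
  (mu : {measure set T -> \bar R}) (p q : T -> R) :
  is_density mu p -> is_density mu q ->
  (forall g : R, 1 <= g ->
     (Egamma mu p q g <=
       ((1 - g + Num.sqrt ((g - 1) ^+ 2 + 4 * g * chi2_ratio g (chi2 mu p q))) / 2)%:E)%E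
     /\
     (Egamma mu p q g <=
       ((1 - g + Num.sqrt ((g - 1) ^+ 2
            + 4 * g * (1 - fine (expeR (- KL mu p q)%E)))) / 2)%:E)%E)
  /\
  (TVnorm mu p q <= (2 * Num.sqrt (1 - fine (expeR (- KL mu p q)%E)))%:E)%E.
Proof.
move=> Hp Hq; split=> [g g1|].
  have [E0 chi2_bd KL_bd] := excess_quadratic_bounds Hp Hq g1.
  by rewrite (Egamma_excess Hp Hq) !lee_fin !quadratic_root_bound.
have [E0 _ KL_bd] := excess_quadratic_bounds Hp Hq (lexx 1).
rewrite !mul1r in E0 KL_bd; rewrite addrK in KL_bd.
rewrite (TVnorm_excess Hp Hq) lee_fin ler_pM2l ?ltr0n // -(ger0_norm E0) -sqrtr_sqr.
by rewrite ler_wsqrtr // expr2.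
Qed.
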